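(* Let $E$ be a nonzero real Banach space, $S\colon E\rightrightarrows E^*$ be closed, monotone and quasidense, $\{(s_\beta,s_\beta^* )\}$ be a bounded net of elements of $G(S)$ and $(z,z^* )\in E\times E^*$. (a) If $s_\beta\to z$ in norm and $s_\beta^*\to z^*$ in $w(E^*,E)$, then $(z,z^* )\in G(S)$. (b) If $s_\beta\to z$ in $w(E,E^* )$ and $s_\beta^*\to z^*$ in norm, then $(z,z^* )\in G(S)$.
   Context: For a multifunction $S\colon E\rightrightarrows E^*$ with nonempty graph $G(S)$: closed means $G(S)$ norm-closed; monotone means $\langle s-t,s^*-t^*\rangle\ge0$ on $G(S)$; quasidense means for every $(x,x^* )\in E\times E^*$, $\inf_{(s,s^* )\in G(S)}[\tfrac12\|s-x\|^2+\tfrac12\|s^*-x^*\|^2+\langle s-x,s^*-x^*\rangle]\le0$. *)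

From HB Require Import structures.
From mathcomp Require Import all_boot all_order all_algebra.
From mathcomp Require Import all_classical all_reals all_analysis.
Set Implicit Arguments. Unset Strict Implicit. Unset Printing Implicit Defensive.
Import Order.TTheory GRing.Theory Num.Theory.
Import numFieldNormedType.Exports.
Local Open Scope classical_set_scope.
Local Open Scope ring_scope.

Section Defs.
Variables (R : realType) (E : normedModType R).

Definition is_dual (f : E -> R) : Prop :=
  (forall (a : R) (x y : E), f (a *: x + y) = a * f x + f y) /\ continuous f.

Definition dnorm (f : E -> R) : R :=
  sup [set `|f x| | x in [set x : E | `|x| <= 1]].

(* G(S) is norm-closed in E x E^* ; norm on the product: max/sum of norms *)
Definition graph_closed (G : set (E * (E -> R))) : Prop :=
  forall (x : E) (xs : E -> R), is_dual xs ->
    (forall eps : R, 0 < eps -> exists s ss, G (s, ss) /\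
        `|s - x| < eps /\ dnorm (fun y => ss y - xs y) < eps) ->
    G (x, xs).

Definition graph_monotone (G : set (E * (E -> R))) : Prop :=
  forall s ss t ts, G (s, ss) -> G (t, ts) -> 0 <= ss (s - t) - ts (s - t).

(* inf over (s, s') in G(S) of [ 1/2||s-x||^2 + 1/2||s'-x'||^2 + <s-x, s'-x'> ] <= 0,
   written out as: for every eps > 0 some value of the bracket is < eps *)
Definition graph_quasidense (G : set (E * (E -> R))) : Prop :=
  forall (x : E) (xs : E -> R), is_dual xs ->
    forall eps : R, 0 < eps -> exists s ss, G (s, ss) /\
      `|s - x| ^+ 2 / 2 + dnorm (fun y => ss y - xs y) ^+ 2 / 2
        + (ss (s - x) - xs (s - x)) < eps.

Definition directed (I : Type) (le : I -> I -> Prop) : Prop :=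
  (exists i : I, True) /\ (forall i, le i i) /\
  (forall i j k, le i j -> le j k -> le i k) /\
  (forall i j, exists k, le i k /\ le j k).

Definition net_norm_cvg (I : Type) (le : I -> I -> Prop) (u : I -> E) (z : E) :=
  forall eps : R, 0 < eps -> exists b0, forall b, le b0 b -> `|u b - z| < eps.

Definition net_weak_cvg (I : Type) (le : I -> I -> Prop) (u : I -> E) (z : E) :=
  forall f : E -> R, is_dual f ->
  forall eps : R, 0 < eps -> exists b0, forall b, le b0 b -> `|f (u b) - f z| < eps.

Definition net_dnorm_cvg (I : Type) (le : I -> I -> Prop) (u : I -> E -> R) (z : E -> R) :=
  forall eps : R, 0 < eps -> exists b0, forall b, le b0 b ->
    dnorm (fun y => u b y - z y) < eps.

Definition net_weakstar_cvg (I : Type) (le : I -> I -> Prop) (u : I -> E -> R) (z : E -> R) :=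
  forall x : E, forall eps : R, 0 < eps -> exists b0, forall b, le b0 b ->
    `|u b x - z x| < eps.

End Defs.

From HB Require Import structures.
From mathcomp Require Import all_boot all_order all_algebra.
From mathcomp Require Import all_classical all_reals all_analysis.
Import Order.TTheory GRing.Theory Num.Theory.
Import numFieldNormedType.Exports.
From mathcomp Require Import ring lra.
Set Implicit Arguments. Unset Strict Implicit.
Local Open Scope classical_set_scope.
Local Open Scope ring_scope.

(* Since S is closed and quasidense, it is maximally monotone: a pair (z, z^* )
   monotonically related to every point of G(S) lies in G(S), because the
   quasidensity inequality at (z, z^* ), combined with <s - z, s^* - z^*> >= 0,
   forces points of G(S) arbitrarily close to (z, z^* ).  Thus it suffices to
   pass to the limit in <s_b - w, s_b^* - w^*> >= 0 for a fixed (w, w^* ) in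
   G(S).  In (a) the split <s_b - z, s_b^* - w^*> + <z - w, s_b^* - w^*> has a
   first term bounded by (M + ||w^*||) ||s_b - z|| -> 0 and a second term
   converging weak-star; in (b) the split <s_b - w, s_b^* - z^*> +
   <s_b - w, z^* - w^*> has a first term bounded by (M + ||w||) ||s_b^* - z^*||
   -> 0 and a second converging weakly. *)

Section DualFunctionals.
Variables (R : realType) (E : normedModType R).
Implicit Types (f g : E -> R) (x y : E).

Lemma dual0 f : is_dual f -> f 0 = 0.
Proof. by move=> [lin _]; have := lin 1 0 0; rewrite scaler0 addr0 mul1r; lra. Qed.

Lemma dualD f x y : is_dual f -> f (x + y) = f x + f y.
Proof. by move=> [lin _]; have := lin 1 x y; rewrite scale1r mul1r. Qed.

Lemma dualZ f a x : is_dual f -> f (a *: x) = a * f x.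
Proof. by move=> fd; have := fd.1 a x 0; rewrite !addr0 (dual0 fd) addr0. Qed.

Lemma dualN f x : is_dual f -> f (- x) = - f x.
Proof. by move=> fd; rewrite -scaleN1r dualZ // mulN1r. Qed.

Lemma dualB f x y : is_dual f -> f (x - y) = f x - f y.
Proof. by move=> fd; rewrite dualD // dualN. Qed.

Lemma is_dualB f g : is_dual f -> is_dual g -> is_dual (fun y => f y - g y).
Proof.
move=> fd gd; split; first by move=> a x y; rewrite fd.1 gd.1; ring.
by move=> x; apply: cvgB; [exact: fd.2 | exact: gd.2].
Qed.

Lemma dual_lt1_near0 f : is_dual f ->
  exists2 d : R, 0 < d & forall y, `|y| < d -> `|f y| < 1.
Proof.
move=> fd; have := fd.2 0; rewrite /continuous_at (dual0 fd).
move=> /cvgrPdist_lt /(_ 1 ltr01) /nbhs_norm0P [d /= d0 fd_small].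
by exists d => // y /fd_small; rewrite /= sub0r normrN.
Qed.

Lemma dual_has_ubound f : is_dual f ->
  has_ubound [set `|f x| | x in [set x : E | `|x| <= 1]].
Proof.
move=> fd; have [d d0 fd_small] := dual_lt1_near0 fd.
exists (2 / d) => _ [y /= y1 <-].
have d2_ge0 : 0 <= d / 2 by rewrite divr_ge0 ?ltW.
have : `|(d / 2) *: y| < d by rewrite normrZ ger0_norm //; nra.
move=> /fd_small; rewrite dualZ // normrM ger0_norm // => fy_small.
by rewrite ler_pdivlMr //; nra.
Qed.

Lemma dnorm_ub f x : is_dual f -> `|x| <= 1 -> `|f x| <= dnorm f.
Proof. by move=> fd x1; apply: ub_le_sup; [exact: dual_has_ubound | exists x]. Qed.

Lemma dnorm_ge0 f : is_dual f -> 0 <= dnorm f.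
Proof. by move=> fd; apply: le_trans (dnorm_ub (x := 0) fd _); rewrite ?normr0. Qed.

Lemma dual_norm_le f x : is_dual f -> `|f x| <= dnorm f * `|x|.
Proof.
move=> fd; have [->|x0] := eqVneq x 0; first by rewrite dual0 // !normr0 mulr0.
have nx_gt0 : 0 < `|x| by rewrite normr_gt0.
have : `|(`|x|)^-1 *: x| <= 1.
  by rewrite normrZ normfV normr_id mulVf ?gt_eqF.
move=> /(dnorm_ub fd); rewrite dualZ // normrM normfV normr_id.
by rewrite ler_pdivrMl // mulrC.
Qed.

Lemma dual_normB_le f g x : is_dual f -> is_dual g ->
  `|f x - g x| <= (dnorm f + dnorm g) * `|x|.
Proof.
move=> fd gd; rewrite mulrDl; apply: le_trans (ler_normB _ _) _.
by rewrite lerD ?dual_norm_le.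
Qed.

End DualFunctionals.

Section RealNets.
Variables (R : realType) (I : Type) (le : I -> I -> Prop).
Hypothesis le_directed : directed le.
Implicit Types (u v : I -> R) (a c : R).

Lemma net_cvg_ge0 u a : (forall b, 0 <= u b) -> net_norm_cvg le u a -> 0 <= a.
Proof.
move=> u_ge0 u_cvg; rewrite leNgt; apply/negP => a_lt0.
have /u_cvg [b0 near_a] : 0 < - a by rewrite oppr_gt0.
have := near_a b0 (le_directed.2.1 b0); rewrite ltr_norml => /andP[_].
by have := u_ge0 b0; lra.
Qed.

Lemma net_cvgD u v a c : net_norm_cvg le u a -> net_norm_cvg le v c ->
  net_norm_cvg le (fun b => u b + v b) (a + c).
Proof.
case: le_directed => _ [_ [le_trans le_up]] u_cvg v_cvg e e0.
have e2_gt0 : 0 < e / 2 by rewrite divr_gt0.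
have [b1 near_a] := u_cvg _ e2_gt0; have [b2 near_c] := v_cvg _ e2_gt0.
have [b0 [b1b0 b2b0]] := le_up b1 b2; exists b0 => b b0b.
have := near_a b (le_trans _ _ _ b1b0 b0b).
have := near_c b (le_trans _ _ _ b2b0 b0b).
by have := ler_normD (u b - a) (v b - c); rewrite opprD addrACA; lra.
Qed.

Lemma net_cvg0_dominated (K : R) u v : 0 <= K ->
  (forall b, `|u b| <= K * v b) ->
  (forall e, 0 < e -> exists b0, forall b, le b0 b -> v b < e) ->
  net_norm_cvg le u 0.
Proof.
move=> K_ge0 u_le v_cvg e e0.
have [b0 v_small] := v_cvg (e / (K + 1)) (divr_gt0 e0 (ltr_wpDl K_ge0 ltr01)).
exists b0 => b /v_small vb_small; rewrite subr0.
have : K * v b <= K * (e / (K + 1)) by rewrite ler_wpM2l // ltW.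
have : K * (e / (K + 1)) < e.
  by rewrite mulrA ltr_pdivrMr ?ltr_wpDl //; nra.
by have := u_le b; lra.
Qed.

End RealNets.

Section MonotoneGraphs.
Variables (R : realType) (E : normedModType R) (G : set (E * (E -> R))).
Hypothesis G_dual : forall p, G p -> is_dual p.2.

Lemma closed_quasidense_maximal z zs :
  graph_closed G -> graph_quasidense G -> is_dual zs ->
  (forall w ws, G (w, ws) -> 0 <= zs (z - w) - ws (z - w)) -> G (z, zs).
Proof.
move=> G_closed G_qd zs_dual related; apply: G_closed => // e e0.
have /(G_qd z zs zs_dual) [s [ss [Gs qd_small]]] : 0 < e ^+ 2 / 2.
  by rewrite divr_gt0 ?exprn_gt0.
exists s, ss; split => //.
have := related _ _ Gs.
rewrite -(opprB s z) (dualN _ zs_dual) (dualN _ (G_dual Gs : is_dual ss)).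
have := normr_ge0 (s - z); split; nra.
Qed.

End MonotoneGraphs.

Section MonotonicityGapLimits.
Variables (R : realType) (E : normedModType R) (I : Type) (le : I -> I -> Prop).
Hypothesis le_directed : directed le.
Variables (s : I -> E) (ss : I -> E -> R) (z w : E) (zs ws : E -> R) (M : R).
Hypotheses (ss_dual : forall b, is_dual (ss b)) (ws_dual : is_dual ws).

Lemma gap_cvg_norm_weakstar :
  (forall b, dnorm (ss b) <= M) ->
  net_norm_cvg le s z -> net_weakstar_cvg le ss zs ->
  net_norm_cvg le (fun b => ss b (s b - w) - ws (s b - w))
    (zs (z - w) - ws (z - w)).
Proof.
move=> ss_bdd s_cvg ss_cvg.
have gap_split b : ss b (s b - w) - ws (s b - w) =
    (ss b (s b - z) - ws (s b - z)) + (ss b (z - w) - ws (z - w)).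
  have -> : s b - w = (s b - z) + (z - w) by rewrite addrA subrK.
  by rewrite (dualD _ _ (ss_dual b)) (dualD _ _ ws_dual); ring.
rewrite (funext gap_split) -[X in net_norm_cvg _ _ X]add0r; apply: net_cvgD => //.
  apply: (net_cvg0_dominated (K := `|M| + dnorm ws)) s_cvg.
    by rewrite addr_ge0 ?dnorm_ge0.
  move=> b; apply: le_trans (dual_normB_le _ (ss_dual b) ws_dual) _.
  by rewrite ler_wpM2r // lerD2r (le_trans (ss_bdd b)) ?ler_norm.
move=> e /(ss_cvg (z - w)) [b0 near_zs]; exists b0 => b /near_zs.
by rewrite opprB addrA subrK.
Qed.

Lemma gap_cvg_weak_norm :
  (forall b, `|s b| <= M) -> is_dual zs ->
  net_weak_cvg le s z -> net_dnorm_cvg le ss zs ->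
  net_norm_cvg le (fun b => ss b (s b - w) - ws (s b - w))
    (zs (z - w) - ws (z - w)).
Proof.
move=> s_bdd zs_dual s_cvg ss_cvg.
have gap_split b : ss b (s b - w) - ws (s b - w) =
    (ss b (s b - w) - zs (s b - w)) + (zs (s b - w) - ws (s b - w)) by ring.
rewrite (funext gap_split) -[X in net_norm_cvg _ _ X]add0r; apply: net_cvgD => //.
  apply: (net_cvg0_dominated (K := `|M| + `|w|)) ss_cvg.
    by rewrite addr_ge0.
  move=> b; have d_dual := is_dualB (ss_dual b) zs_dual.
  rewrite mulrC; apply: le_trans (dual_norm_le _ d_dual) _.
  rewrite ler_wpM2l ?dnorm_ge0 //; apply: le_trans (ler_normB _ _) _.
  by rewrite lerD2r (le_trans (s_bdd b)) ?ler_norm.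
pose d y := zs y - ws y; have d_dual : is_dual d := is_dualB zs_dual ws_dual.
change (net_norm_cvg le (fun b => d (s b - w)) (d (z - w))).
move=> e /(s_cvg _ d_dual) [b0 near_z]; exists b0 => b /near_z.
suff -> : d (s b - w) - d (z - w) = d (s b) - d z by [].
by rewrite !(dualB _ _ d_dual); ring.
Qed.

End MonotonicityGapLimits.

Theorem lemma6p3 (R : realType) (E : completeNormedModType R)
  (G : set (E * (E -> R)))
  (I : Type) (le : I -> I -> Prop) (s : I -> E) (ss : I -> E -> R)
  (z : E) (zs : E -> R) :
  (exists x : E, x != 0) ->
  (forall p, G p -> is_dual p.2) ->
  (exists p, G p) ->
  graph_closed G -> graph_monotone G -> graph_quasidense G ->
  directed le ->
  (forall b, G (s b, ss b)) ->
  (exists M : R, forall b, `|s b| <= M /\ dnorm (ss b) <= M) ->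
  is_dual zs ->
  (net_norm_cvg le s z -> net_weakstar_cvg le ss zs -> G (z, zs)) /\
  (net_weak_cvg le s z -> net_dnorm_cvg le ss zs -> G (z, zs)).
Proof.
move=> _ G_dual _ G_closed G_mono G_qd le_directed Gs [M s_ss_bdd] zs_dual.
have ss_dual b : is_dual (ss b) := G_dual _ (Gs b).
have bdd_s b : `|s b| <= M := (s_ss_bdd b).1.
have bdd_ss b : dnorm (ss b) <= M := (s_ss_bdd b).2.
split=> [s_cvg ss_cvg | s_cvg ss_cvg];
  apply: closed_quasidense_maximal => // w ws Gw;
  have ws_dual : is_dual ws := G_dual _ Gw;
  have gap_ge0 b := G_mono _ _ _ _ (Gs b) Gw;
  apply: (net_cvg_ge0 le_directed gap_ge0).
- exact: (gap_cvg_norm_weakstar le_directed w ss_dual ws_dual bdd_ss).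
- exact: (gap_cvg_weak_norm le_directed w ss_dual ws_dual bdd_s zs_dual).
Qed.
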